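(* Let $f:\mathbb{R}^d\to\mathbb{R}$ be differentiable, let $k\in\mathbb{N}$, let $x_0,\dots,x_k\in\mathbb{R}^d$, $B_k\in\mathbb{S}^d$, and $\sigma,\delta>0$. Define $$m_k(s):=\Big\langle \nabla f(x_k)+\frac{1}{k+1}\sum_{i=0}^k(2i+1)\nabla f(x_i),\,s\Big\rangle+\frac12\langle B_ks,s\rangle+\frac{\sigma}{4}\|s\|^4.$$ Suppose $s_k\in\mathbb{R}^d$ satisfies $\|\nabla m_k(s_k)\|\le\delta\|s_k\|$, and set $x_{k+1}:=x_k+s_k$, $r_k:=\nabla f(x_{k+1})-\nabla f(x_k)-B_ks_k$, and $$\bar g_{k+1}:=\frac{1}{(k+1)(k+2)}\Big(\sum_{i=0}^{k}(2i+1)\nabla f(x_i)+(k+1)\nabla f(x_{k+1})\Big).$$ Then $$\big\|(k+2)\bar g_{k+1}+\sigma\|s_k\|^2s_k\big\|\le\|r_k\|+\delta\|s_k\|.$$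
   Context: $\mathbb{S}^d$ denotes the set of real symmetric $d\times d$ matrices; $\|\cdot\|$ is the Euclidean norm. *)

From HB Require Import structures.
From mathcomp Require Import all_boot all_order all_algebra.
From mathcomp Require Import all_classical all_reals all_analysis.
Set Implicit Arguments. Unset Strict Implicit. Unset Printing Implicit Defensive.
Import Order.TTheory GRing.Theory Num.Theory.
Import numFieldNormedType.Exports.
Local Open Scope ring_scope.

Definition dotp (R : realType) (d : nat) (u v : 'cV[R]_d) : R := (u^T *m v) 0 0.

Definition enorm (R : realType) (d : nat) (v : 'cV[R]_d) : R :=
  Num.sqrt (\sum_(i < d) v i 0 ^+ 2).

Definition grad (R : realType) (d : nat) (f : 'cV[R]_d -> R) (x : 'cV[R]_d)
  : 'cV[R]_d := \col_j ('d f x (delta_mx j 0 : 'cV[R]_d)).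

From HB Require Import structures.
From mathcomp Require Import all_boot all_order all_algebra.
From mathcomp Require Import all_classical all_reals all_analysis.
From mathcomp Require Import ring lra.
Import Order.TTheory GRing.Theory Num.Theory.
Import numFieldNormedType.Exports.
Local Open Scope ring_scope.

(* The gradient of the cubic model at s is c + B s + sigma ||s||^2 s, where c is
   its linear coefficient; symmetry of B is what turns the gradient of
   <B s, s> / 2 into B s.  Hence (k+2) gbar + sigma ||s||^2 s = grad m(s) + r
   holds exactly, and the claim is the triangle inequality together with
   ||grad m(s)|| <= delta ||s||.  Neither the differentiability of f nor the
   signs of sigma and delta play a role: grad f only enters as a vector
   field. *)

Lemma cauchy_schwarz_sum (R : realDomainType) (I : finType) (a b : I -> R) :
  (\sum_i a i * b i) ^+ 2 <= (\sum_i a i ^+ 2) * (\sum_i b i ^+ 2).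
Proof.
have lagrange : \sum_i \sum_j (a i * b j - a j * b i) ^+ 2 =
    2 * ((\sum_i a i ^+ 2) * (\sum_i b i ^+ 2) - (\sum_i a i * b i) ^+ 2).
  transitivity (\sum_i \sum_j (a i ^+ 2 * b j ^+ 2 + b i ^+ 2 * a j ^+ 2
                               - 2 * (a i * b i) * (a j * b j))).
    by apply: eq_bigr => i _; apply: eq_bigr => j _; ring.
  under eq_bigr => i _ do rewrite sumrB big_split /=.
  rewrite sumrB big_split /= -!big_distrlr /=.
  by rewrite -mulr_sumr; ring.
rewrite -subr_ge0 -(pmulr_rge0 _ (ltr0n R 2)) -lagrange.
by apply: sumr_ge0 => i _; apply: sumr_ge0 => j _; apply: sqr_ge0.
Qed.

Section Euclid.
Context {R : realType} {d : nat}.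
Implicit Types (u v w : 'cV[R]_d).

Lemma dotpE u v : dotp u v = \sum_i u i 0 * v i 0.
Proof. by rewrite /dotp mxE; apply: eq_bigr => i _; rewrite mxE. Qed.

Lemma dotpC u v : dotp u v = dotp v u.
Proof. by rewrite !dotpE; apply: eq_bigr => i _; rewrite mulrC. Qed.

Lemma dotpDl u v w : dotp (u + v) w = dotp u w + dotp v w.
Proof. by rewrite /dotp linearD mulmxDl mxE. Qed.

Lemma dotpZl (a : R) u v : dotp (a *: u) v = a * dotp u v.
Proof. by rewrite /dotp linearZ -scalemxAl mxE. Qed.

Lemma dotp_delta_mxr v i : dotp v (delta_mx i 0) = v i 0.
Proof.
rewrite dotpE (bigD1 i) //= big1 => [|j /negbTE nji]; rewrite mxE ?eqxx ?nji /=.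
  by rewrite mulr1 addr0.
by rewrite mulr0.
Qed.

Lemma dotp_mulmxl (B : 'M[R]_d) u v : dotp (B *m u) v = dotp u (B^T *m v).
Proof. by rewrite /dotp trmx_mul mulmxA. Qed.

Lemma enorm_ge0 v : 0 <= enorm v.
Proof. exact: sqrtr_ge0. Qed.

Lemma enorm_sqr v : enorm v ^+ 2 = dotp v v.
Proof.
rewrite sqr_sqrtr ?dotpE; last by apply: sumr_ge0 => i _; rewrite sqr_ge0.
by apply: eq_bigr => i _; rewrite expr2.
Qed.

Lemma dotp_le_enorm u v : dotp u v <= enorm u * enorm v.
Proof.
apply: le_trans (ler_norm (dotp u v)) _.
rewrite -sqrtr_sqr /enorm -sqrtrM ?sumr_ge0 // => [|i _]; last exact: sqr_ge0.
rewrite ler_sqrt; last by rewrite mulr_ge0 ?sumr_ge0 // => i _; exact: sqr_ge0.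
by rewrite dotpE cauchy_schwarz_sum.
Qed.

Lemma ler_enormD u v : enorm (u + v) <= enorm u + enorm v.
Proof.
rewrite -(ler_pXn2r (n := 2)) ?nnegrE ?addr_ge0 ?enorm_ge0 //.
rewrite sqrrD !enorm_sqr dotpDl ![dotp _ (u + v)]dotpC !dotpDl (dotpC u v).
have := dotp_le_enorm v u; rewrite [enorm v * _]mulrC; lra.
Qed.
End Euclid.

Section Differential.
Context {R : realType}.

Lemma is_diff_coord {m n : nat} (M : 'M[R]_(m, n)) i j :
  is_diff M (fun N : 'M[R]_(m, n) => N i j) (fun N => N i j).
Proof.
have coord_linear : linear (fun N : 'M[R]_(m, n) => N i j).
  by move=> a N N'; rewrite !mxE.
pose coord : {linear 'M[R]_(m, n) -> R} :=
  HB.pack (fun N : 'M[R]_(m, n) => N i j)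
          (GRing.isLinear.Build _ _ _ _ _ coord_linear).
have -> : (fun N : 'M[R]_(m, n) => N i j) = coord by [].
apply: DiffDef; first exact/linear_differentiable/coord_continuous.
exact/diff_lin/coord_continuous.
Qed.

Lemma is_diff_sum {V W : normedModType R} {n : nat}
    {f df : 'I_n -> V -> W} {x : V} :
  (forall i, is_diff x (f i) (df i)) -> is_diff x (\sum_i f i) (\sum_i df i).
Proof.
move=> fdf; elim/big_ind2 : _ => //; first exact: (is_diff_cst 0 x).
by move=> f1 df1 f2 df2 ? ?; apply: is_diffD.
Qed.

Context {d : nat}.
Local Notation V := 'cV[R]_d.

Lemma is_diff_dotpr (c x : V) : is_diff x (dotp c) (dotp c).
Proof.
have := is_diff_sum (fun i => is_diffZ (c i 0) (is_diff_coord x i 0)).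
have dotp_sum : \sum_i c i 0 *: (fun y : V => y i 0) = dotp c.
  by apply/funext => y; rewrite fct_sumE dotpE.
by rewrite dotp_sum.
Qed.

Lemma is_diff_mulmx_coord (B : 'M[R]_d) (x : V) i :
  is_diff x (fun y : V => (B *m y) i 0) (fun h => (B *m h) i 0).
Proof.
have -> : (fun y : V => (B *m y) i 0) = dotp (row i B)^T.
  by apply/funext => y; rewrite /dotp trmxK -row_mul [RHS]mxE.
exact: is_diff_dotpr.
Qed.

Lemma is_diff_dotp {U : normedModType R} {f g df dg : U -> V} {x : U} :
  (forall i, is_diff x (fun y => f y i 0) (fun h => df h i 0)) ->
  (forall i, is_diff x (fun y => g y i 0) (fun h => dg h i 0)) ->
  is_diff x (fun y => dotp (f y) (g y))
            (fun h => dotp (f x) (dg h) + dotp (df h) (g x)).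
Proof.
move=> fdf gdg; have := is_diff_sum (fun i => is_diffM (fdf i) (gdg i)).
have -> : \sum_i (fun y => f y i 0) * (fun y => g y i 0) =
          (fun y => dotp (f y) (g y)).
  by apply/funext => y; rewrite fct_sumE dotpE.
move/is_diff_eq; apply; apply/funext => h.
rewrite fct_sumE !dotpE -big_split.
by apply: eq_bigr => i _; rewrite [df h i 0 * _]mulrC.
Qed.

Lemma grad_val {f : V -> R} {g x : V} : is_diff x f (dotp g) -> grad f x = g.
Proof.
by move=> fg; apply/matrixP => i j; rewrite (ord1 j) mxE diff_val dotp_delta_mxr.
Qed.

Definition cubic_model (c : V) (B : 'M[R]_d) (sigma : R) (y : V) : R :=
  dotp c y + 1 / 2 * dotp (B *m y) y + sigma / 4 * enorm y ^+ 4.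

Lemma is_diff_cubic_model (c : V) (B : 'M[R]_d) (sigma : R) (s : V) :
  B^T = B ->
  is_diff s (cubic_model c B sigma)
            (dotp (c + B *m s + (sigma * enorm s ^+ 2) *: s)).
Proof.
move=> symB.
have coord i : is_diff s (fun y : V => y i 0) (fun h : V => h i 0) :=
  is_diff_coord s i 0.
have quad := is_diff_dotp (is_diff_mulmx_coord B s) coord.
have sqnorm := is_diff_dotp (f := id) (df := id) coord coord.
have := is_diffD (is_diffD (is_diff_dotpr c s) (is_diffZ (1 / 2) quad))
                 (is_diffZ (sigma / 4) (is_diffX 1 sqnorm)).
rewrite (_ : _ + _ = cubic_model c B sigma); last first.
  by rewrite !fctE; apply/funext => y; rewrite -enorm_sqr -exprM.
move/is_diff_eq; apply; rewrite !fctE; apply/funext => h.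
rewrite !dotpDl dotpZl (dotp_mulmxl B h) symB !(dotpC h) -enorm_sqr.
by rewrite /GRing.scale /=; field.
Qed.

End Differential.

Theorem lemma3p1 (R : realType) (d : nat) (f : 'cV[R]_d -> R)
  (hf : forall x : 'cV[R]_d, differentiable f x)
  (k : nat) (x : nat -> 'cV[R]_d) (B : 'M[R]_d) (hB : B^T = B)
  (sigma delta : R) (hsigma : 0 < sigma) (hdelta : 0 < delta)
  (s : 'cV[R]_d)
  (hs : enorm (grad (fun s' : 'cV[R]_d =>
            dotp (grad f (x k) + (k.+1%:R)^-1 *:
                    (\sum_(i < k.+1) (2 * i + 1)%:R *: grad f (x i))) s'
            + 1 / 2 * dotp (B *m s') s'
            + sigma / 4 * enorm s' ^+ 4) s)
        <= delta * enorm s) :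
  let xk1 := x k + s in
  let r := grad f xk1 - grad f (x k) - B *m s in
  let gbar := ((k.+1 * k.+2)%:R)^-1 *:
      (\sum_(i < k.+1) (2 * i + 1)%:R *: grad f (x i) + k.+1%:R *: grad f xk1) in
  enorm (k.+2%:R *: gbar + (sigma * enorm s ^+ 2) *: s)
    <= enorm r + delta * enorm s.
Proof.
cbv zeta.
set S := \sum_(i < k.+1) _ in hs *; set t := _ *: s.
set c := grad f (x k) + _ in hs.
rewrite (grad_val (is_diff_cubic_model c B sigma s hB)) in hs.
have scaled_gbar :
    k.+2%:R *: ((k.+1 * k.+2)%:R^-1 *: (S + k.+1%:R *: grad f (x k + s)))
    = k.+1%:R^-1 *: S + grad f (x k + s).
  rewrite scalerA natrM invfM mulrCA mulfV ?pnatr_eq0 // mulr1.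
  by rewrite scalerDr scalerA mulVf ?pnatr_eq0 // scale1r.
rewrite scaled_gbar (_ : _ + t = grad f (x k + s) - grad f (x k) - B *m s
                                 + (c + B *m s + t)).
  by apply: le_trans (ler_enormD _ _) _; rewrite lerD2l.
rewrite /c; move: (grad f (x k + s)) (grad f (x k)) (B *m s) => g1 g0 Bs.
by apply/matrixP => i j; rewrite !mxE; ring.
Qed.
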